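(* Let $\kappa=[2\ell-1]$ with $\ell\in\mathbb Z$. Then $\mathfrak g^{(n)}(\kappa)\in\mathbb Z[q,q^{-1}]$ for all $n\in\mathbb N$.
   Context: $q$ is an indeterminate, $[n]=\frac{q^n-q^{-n}}{q-q^{-1}}$ for $n\in\mathbb Z$, $[n]!=[1]\cdots[n]$, $[0]!=1$. The polynomials $\mathfrak g_n(x)$ are $\mathfrak g_{2m}(x)=\prod_{i=1}^{m}(x^2-[2i-1]^2)$ and $\mathfrak g_{2m+1}(x)=x\prod_{i=1}^m(x^2-[2i-1]^2)$, and $\mathfrak g^{(n)}=\mathfrak g_n/[n]!$. *)

From mathcomp Require Import all_boot all_order all_algebra.
Set Implicit Arguments. Unset Strict Implicit. Unset Printing Implicit Defensive.
Import Order.TTheory GRing.Theory Num.Theory.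
Local Open Scope ring_scope.

(* The ambient field: rational functions Q(q) realised as the fraction field of Z[q]. *)
Definition K : fieldType := {fraction {poly int}}.

Definition toK (p : {poly int}) : K := FracField.tofrac p.

Definition qq : K := toK 'X.

Definition qint (n : int) : K := (qq ^ n - qq ^ (- n)) / (qq - qq^-1).

Definition qfact (n : nat) : K := \prod_(1 <= i < n.+1) qint (i%:Z).

(* g_{2m}(x) = prod_{i=1}^m (x^2 - [2i-1]^2), g_{2m+1}(x) = x * prod_{i=1}^m (x^2 - [2i-1]^2) *)
Definition gpoly (n : nat) (x : K) : K :=
  (if odd n then x else 1) *
  \prod_(1 <= i < (n./2).+1) (x ^+ 2 - qint (2 * (i%:Z) - 1) ^+ 2).

Definition gdiv (n : nat) (x : K) : K := gpoly n x / qfact n.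

(* membership in Z[q, q^-1] inside K *)
Definition laurent (x : K) : Prop :=
  exists (p : {poly int}) (k : nat), x = toK p / qq ^+ k.

From mathcomp Require Import all_boot all_order all_algebra.
From mathcomp Require Import ring zify.
Set Implicit Arguments. Unset Strict Implicit. Unset Printing Implicit Defensive.
Import GRing.Theory.
Local Open Scope ring_scope.

(* Let G(c, n) = [2c][2c+2]...[2c+2n-2] / [n]!. Since [a]^2 - [b]^2 = [a+b][a-b], we get
   g^(2m)([2l-1]) = G(l-m, 2m); splitting [2l-1] = q^(2m+1) [2(l-m-1)] + q^(-2(l-m-1)) [2m+1]
   writes g^(2m+1)([2l-1]) as a Laurent combination of G(l-m-1, 2m+1) and G(l-m, 2m).
   The G obey the Pascal-type rule
     G(c+1, n+1) = q^(2n+2) G(c, n+1) + q^(-2c) (q^(n+1) + q^(-n-1)) G(c+1, n),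
   and G(0, n+1) = 0 because [0] = 0.  As q^(2n+2) is a unit, induction on n and then on c,
   upwards and downwards from c = 0, shows that every G(c, n) lies in Z[q, q^-1]. *)

Section QuantumIntegers.

Variables (F : fieldType) (q : F).

Definition qnum (n : int) : F := (q ^ n - q ^ (- n)) / (q - q^-1).

Lemma qnum0 : qnum 0 = 0.
Proof. by rewrite /qnum oppr0 subrr mul0r. Qed.

Definition qnum_fact (n : nat) : F := \prod_(1 <= i < n.+1) qnum i%:Z.

Lemma qnum_factS n : qnum_fact n.+1 = qnum_fact n * qnum n.+1%:Z.
Proof. by rewrite /qnum_fact big_nat_recr. Qed.

Definition qeven_prod (c : int) (n : nat) : F := \prod_(i < n) qnum (2 * (c + i%:Z)).

Definition qeven_binom (c : int) (n : nat) : F := qeven_prod c n / qnum_fact n.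

Lemma qeven_prod_recl c n : qeven_prod c n.+1 = qnum (2 * c) * qeven_prod (c + 1) n.
Proof.
rewrite /qeven_prod big_ord_recl addr0; congr (_ * _); apply: eq_bigr => i _.
by rewrite lift0; congr (qnum _); lia.
Qed.

Lemma qeven_prod_recr c n :
  qeven_prod c n.+1 = qeven_prod c n * qnum (2 * (c + n%:Z)).
Proof. by rewrite /qeven_prod big_ord_recr. Qed.

Lemma qeven_prod0S n : qeven_prod 0 n.+1 = 0.
Proof. by rewrite qeven_prod_recl mulr0 qnum0 mul0r. Qed.

Hypothesis q_neq0 : q != 0.

(* When [q - q^-1 = 0] every [qnum] vanishes, so no hypothesis beyond [q != 0] is needed. *)
Lemma qnumD a b : qnum (a + b) = q ^ b * qnum a + q ^ (- a) * qnum b.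
Proof.
rewrite /qnum opprD !expfzDr // -!invr_expz; move: (q - q^-1) => d.
have [->|d_neq0] := eqVneq d 0; first by rewrite invr0 !mulr0 addr0.
have qa_neq0 := expfz_neq0 a q_neq0; have qb_neq0 := expfz_neq0 b q_neq0.
by field; rewrite d_neq0 qa_neq0 qb_neq0.
Qed.

Lemma qnum_double n : qnum (2 * n) = qnum n * (q ^ n + q ^ (- n)).
Proof.
have -> : 2 * n = n + n by lia.
by rewrite qnumD -mulrDl mulrC.
Qed.

Lemma qnum_sqrB a b : qnum a ^+ 2 - qnum b ^+ 2 = qnum (a + b) * qnum (a - b).
Proof.
rewrite /qnum opprB opprD !expfzDr // -!invr_expz; move: (q - q^-1) => d.
have [->|d_neq0] := eqVneq d 0; first by rewrite invr0 !mulr0 expr0n subr0.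
have qa_neq0 := expfz_neq0 a q_neq0; have qb_neq0 := expfz_neq0 b q_neq0.
by field; rewrite d_neq0 qa_neq0 qb_neq0.
Qed.

Lemma prod_qnum_sqrB l m :
  \prod_(1 <= i < m.+1) (qnum (2 * l - 1) ^+ 2 - qnum (2 * i%:Z - 1) ^+ 2)
  = qeven_prod (l - m%:Z) m.*2.
Proof.
elim: m => [|m IHm]; first by rewrite big_geq // /qeven_prod big_ord0.
rewrite big_nat_recr //= IHm qnum_sqrB doubleS qeven_prod_recl qeven_prod_recr.
have -> : l - m.+1%:Z + 1 = l - m%:Z by lia.
have -> : 2 * l - 1 + (2 * m.+1%:Z - 1) = 2 * (l - m%:Z + (m.*2)%:Z) by lia.
have -> : 2 * l - 1 - (2 * m.+1%:Z - 1) = 2 * (l - m.+1%:Z) by lia.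
by rewrite mulrA mulrC mulrA.
Qed.

Hypothesis qX_neq1 : forall n, (0 < n)%N -> q ^+ n != 1.

Lemma qnum_neq0 (n : nat) : (0 < n)%N -> qnum n%:Z != 0.
Proof.
have qXBV_neq0 k : (0 < k)%N -> q ^+ k - (q ^+ k)^-1 != 0.
  move=> k_gt0; rewrite subr_eq0; apply/eqP => e.
  have /eqP[] : q ^+ (k + k) != 1 by rewrite qX_neq1 // addn_gt0 k_gt0.
  by rewrite exprD {2}e mulfV ?expf_neq0.
move=> n_gt0; rewrite /qnum -exprnN mulf_eq0 invr_eq0 negb_or.
apply/andP; split; first exact: qXBV_neq0.
by have := qXBV_neq0 _ (ltn0Sn 0); rewrite expr1.
Qed.

Lemma qnum_fact_neq0 n : qnum_fact n != 0.
Proof.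
elim: n => [|n IHn]; first by rewrite /qnum_fact big_geq ?oner_neq0.
by rewrite qnum_factS mulf_neq0 ?qnum_neq0.
Qed.

Lemma qeven_binomS c k :
  qeven_binom (c + 1) k.+1 = q ^ (2 * k.+1%:Z) * qeven_binom c k.+1
    + q ^ (- (2 * c)) * (q ^ k.+1%:Z + q ^ (- k.+1%:Z)) * qeven_binom (c + 1) k.
Proof.
rewrite /qeven_binom qeven_prod_recr qeven_prod_recl qnum_factS.
have -> : 2 * (c + 1 + k%:Z) = 2 * c + 2 * k.+1%:Z by lia.
rewrite qnumD (qnum_double k.+1%:Z).
have := qnum_fact_neq0 k; have := qnum_neq0 (ltn0Sn k).
by move=> *; field; apply/andP.
Qed.

Lemma qnum_odd_qeven_prod l m :
  qnum (2 * l - 1) * qeven_prod (l - m%:Z) m.*2 / qnum_fact m.*2.+1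
  = q ^ (m.*2.+1)%:Z * qeven_binom (l - m%:Z - 1) m.*2.+1
    + q ^ (- (2 * (l - m%:Z - 1))) * qeven_binom (l - m%:Z) m.*2.
Proof.
have -> : 2 * l - 1 = 2 * (l - m%:Z - 1) + (m.*2.+1)%:Z by lia.
rewrite qnumD /qeven_binom qeven_prod_recl subrK qnum_factS.
have := qnum_fact_neq0 m.*2; have := qnum_neq0 (ltn0Sn m.*2).
by move=> *; field; apply/andP.
Qed.

End QuantumIntegers.

Lemma qq_neq0 : qq != 0.
Proof. by rewrite /qq /toK tofrac_eq0 polyX_eq0. Qed.

Lemma qqX_neq1 n : (0 < n)%N -> qq ^+ n != 1.
Proof.
move=> n_gt0; rewrite /qq /toK -tofracXn -tofrac1 tofrac_eq.
apply/eqP => /(congr1 (size : {poly int} -> nat)).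
by rewrite size_polyXn size_poly1; case: n n_gt0.
Qed.

Lemma laurent0 : laurent 0.
Proof. by exists 0, 0%N; rewrite /toK tofrac0 mul0r. Qed.

Lemma laurent1 : laurent 1.
Proof. by exists 1, 0%N; rewrite /toK tofrac1 expr0 divr1. Qed.

Lemma laurentN x : laurent x -> laurent (- x).
Proof. by move=> [p [k ->]]; exists (- p), k; rewrite /toK tofracN mulNr. Qed.

Lemma laurentD x y : laurent x -> laurent y -> laurent (x + y).
Proof.
move=> [p [k ->]] [p' [k' ->]]; exists (p * 'X^k' + p' * 'X^k), (k + k')%N.
rewrite /toK tofracD !tofracM !tofracXn -/(toK 'X) -/qq exprD.
by rewrite addf_div ?expf_neq0 ?qq_neq0.
Qed.

Lemma laurentM x y : laurent x -> laurent y -> laurent (x * y).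
Proof.
move=> [p [k ->]] [p' [k' ->]]; exists (p * p'), (k + k')%N.
by rewrite /toK tofracM exprD invfM mulrACA.
Qed.

Lemma laurent_qqz z : laurent (qq ^ z).
Proof.
case: z => n; first by exists 'X^n, 0%N; rewrite /toK tofracXn expr0 divr1.
by exists 1, n.+1; rewrite NegzE -exprnN /toK tofrac1 div1r.
Qed.

Lemma laurent_qqzMD z x y : laurent y -> laurent (qq ^ z * x + y) <-> laurent x.
Proof.
move=> ly; split=> [lxy|lx].
  have -> : x = qq ^ (- z) * (qq ^ z * x + y - y).
    by rewrite addrK mulrA -expfzDr ?qq_neq0 // addNr expr0z mul1r.
  apply: laurentM; first exact: laurent_qqz.
  by apply: laurentD => //; apply: laurentN.
by apply: laurentD => //; apply: laurentM => //; apply: laurent_qqz.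
Qed.

Lemma laurent_qeven_binom c n : laurent (qeven_binom qq c n).
Proof.
elim: n c => [|k IHk] c.
  by rewrite /qeven_binom /qeven_prod /qnum_fact big_ord0 big_geq // divr1; exact: laurent1.
have shift d : laurent (qeven_binom qq (d + 1) k.+1) <-> laurent (qeven_binom qq d k.+1).
  rewrite (qeven_binomS qq_neq0 qqX_neq1); apply: laurent_qqzMD.
  apply: laurentM => //; apply: laurentM; first exact: laurent_qqz.
  by apply: laurentD; apply: laurent_qqz.
elim/int_rect: c => [|m IHm|m IHm].
- by rewrite /qeven_binom qeven_prod0S mul0r; exact: laurent0.
- have -> : m.+1%:Z = m%:Z + 1 by lia.
  exact/shift.
- have e : - m.+1%:Z + 1 = - m%:Z by lia.
  by apply/shift; rewrite e.
Qed.

Lemma gdiv_double l m :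
  gdiv m.*2 (qint (2 * l - 1)) = qeven_binom qq (l - m%:Z) m.*2.
Proof.
rewrite /gdiv /gpoly odd_double doubleK mul1r.
by rewrite /qeven_binom -(prod_qnum_sqrB qq_neq0).
Qed.

Lemma gdiv_doubleS l m :
  gdiv m.*2.+1 (qint (2 * l - 1))
  = qq ^ (m.*2.+1)%:Z * qeven_binom qq (l - m%:Z - 1) m.*2.+1
    + qq ^ (- (2 * (l - m%:Z - 1))) * qeven_binom qq (l - m%:Z) m.*2.
Proof.
rewrite /gdiv /gpoly /= odd_double /= uphalf_double.
by rewrite -(qnum_odd_qeven_prod qq_neq0 qqX_neq1) -(prod_qnum_sqrB qq_neq0).
Qed.

Theorem lemma4p3 (l : int) (n : nat) :
  laurent (gdiv n (qint (2 * l - 1))).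
Proof.
rewrite -(odd_double_half n); case: (odd n).
- rewrite add1n gdiv_doubleS.
  by apply: laurentD; apply: laurentM; apply: laurent_qqz || apply: laurent_qeven_binom.
- by rewrite add0n gdiv_double; apply: laurent_qeven_binom.
Qed.
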